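(* Let $q\ge2$ and let $n,k$ be integers with $0<k\le n$. Then $$2^{nE_{k,q}}\le a_q(n,k)\le 2^{nE_{k,q}}+2q^{\,n-\lceil k/2\rceil}.$$
   Context: $\Sigma_q=\{0,\dots,q-1\}$. A vector in $\Sigma_q^n$ is a $k$-RLL vector if $n<k$ or it has no run of $k$ consecutive zeros; $a_q(n,k)$ is the number of $k$-RLL vectors in $\Sigma_q^n$. For fixed $k,q$, the capacity is $E_{k,q}=\lim_{n\to\infty}\frac{\log_2 a_q(n,k)}{n}$ (this limit exists). *)

From Stdlib Require Import Reals.
From mathcomp Require Import all_boot.

Set Implicit Arguments.
Unset Strict Implicit.
Unset Printing Implicit Defensive.

Definition has_zero_run (q n k : nat) (w : n.-tuple 'I_q) : bool :=
  [exists i : 'I_n.+1,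
     (i + k <= n) && [forall j : 'I_k, nth 0 (map val w) (i + j) == 0]].

Definition RLL (q n k : nat) (w : n.-tuple 'I_q) : bool :=
  (n < k) || ~~ has_zero_run k w.

Definition a_q (q n k : nat) : nat := #|[pred w : n.-tuple 'I_q | RLL k w]|.

Definition log2 (x : R) : R := Rdiv (ln x) (ln 2).

From Stdlib Require Import Reals Lra.
From mathcomp Require Import all_boot zify.

Set Implicit Arguments.
Unset Strict Implicit.
Unset Printing Implicit Defensive.

(* Cutting a word in two shows that a_q(., k) is submultiplicative, so the
   rate log2 a_q(mn, k) / (mn) never exceeds log2 a_q(n, k) / n and its limit
   E gives 2^(nE) <= a_q(n, k).  Conversely, let h = ceil(k/2) and call an
   RLL word clean if it neither begins nor ends with h zeros.  A run of k
   zeros across the junction of two clean words would put at least h of its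
   zeros on one side, so clean words concatenate into clean words: their
   number b(n) is supermultiplicative and b(n) <= 2^(nE).  A non-clean word
   begins or ends with h zeros, which leaves at most 2 q^(n-h) of them. *)

Definition zero_run (k : nat) (s : seq nat) : Prop :=
  exists2 i, i + k <= size s & forall j, j < k -> nth 0 s (i + j) = 0.

Definition zero_prefix (h : nat) (s : seq nat) : bool := all (pred1 0) (take h s).

Lemma zero_run_catl k u v : zero_run k u -> zero_run k (u ++ v).
Proof.
case=> i hi hz; exists i => [|j hj]; first by rewrite size_cat; lia.
by rewrite nth_cat ifT ?hz //; lia.
Qed.

Lemma zero_run_catr k u v : zero_run k v -> zero_run k (u ++ v).
Proof.
case=> i hi hz; exists (size u + i) => [|j hj]; first by rewrite size_cat; lia.
by rewrite nth_cat ltnNge -addnA leq_addr /= addKn hz.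
Qed.

Lemma zero_prefix_catl h u v :
  h <= size u -> zero_prefix h (u ++ v) = zero_prefix h u.
Proof. by move=> hu; rewrite /zero_prefix takel_cat. Qed.

Lemma zero_prefix_nseq h s :
  h <= size s -> zero_prefix h s -> s = nseq h 0 ++ drop h s.
Proof. by move=> hs /all_pred1P; rewrite size_takel // => <-; rewrite cat_take_drop. Qed.

Lemma zero_run_cat_cases k h u v :
  h <= size u -> h <= size v -> h.*2 <= k.+1 -> zero_run k (u ++ v) ->
  [\/ zero_run k u, zero_run k v, zero_prefix h (rev u) | zero_prefix h v].
Proof.
move=> hu hv hk [i hi hz]; rewrite size_cat in hi.
case: (leqP (i + k) (size u)) => [inu | ltu].
  by apply: Or41; exists i => // j hj; have := hz j hj; rewrite nth_cat ifT //; lia.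
case: (leqP (size u) i) => [inv | ltiu].
  apply: Or42; exists (i - size u) => [|j hj]; first lia.
  have -> : i - size u + j = i + j - size u by lia.
  by have := hz j hj; rewrite nth_cat ifN //; lia.
case: (leqP h (size u - i)) => [long_u | short_u].
  apply: Or43; apply/(all_nthP 0) => j; rewrite size_takel ?size_rev // => hj.
  rewrite nth_take // nth_rev; last lia.
  have -> : size u - j.+1 = i + (size u - j.+1 - i) by lia.
  by apply/eqP; have := hz (size u - j.+1 - i) ltac:(lia); rewrite nth_cat ifT //; lia.
apply: Or44; apply/(all_nthP 0) => j; rewrite size_takel // => hj.
rewrite nth_take //; have -> : j = i + (size u - i + j) - size u by lia.
by apply/eqP; have := hz (size u - i + j) ltac:(lia); rewrite nth_cat ifN //; lia.
Qed.

Section Words.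

Variables q k h : nat.

Lemma has_zero_runP n (w : n.-tuple 'I_q) :
  reflect (zero_run k (map val w)) (has_zero_run k w).
Proof.
rewrite /zero_run size_map size_tuple.
apply: (iffP existsP) => [[i /andP[hi /forallP hz]] | [i hi hz]].
  by exists i => // j hj; apply/eqP: (hz (Ordinal hj)).
have hi' : i < n.+1 by lia.
by exists (Ordinal hi'); rewrite /= hi; apply/forallP => j; apply/eqP/hz.
Qed.

Lemma RLLP n (w : n.-tuple 'I_q) : reflect (~ zero_run k (map val w)) (RLL k w).
Proof.
rewrite /RLL; case: ltnP => [ltnk | _] /=.
  by constructor => -[i]; rewrite size_map size_tuple; lia.
by apply: (iffP negP) => nz /has_zero_runP /nz.
Qed.

Definition rll_words n := [set w : n.-tuple 'I_q | RLL k w].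

Definition rll_clean_words n :=
  [set w in rll_words n |
    ~~ zero_prefix h (map val w) & ~~ zero_prefix h (rev (map val w))].

Definition b_q n := #|rll_clean_words n|.

Lemma card_rll_words n : #|rll_words n| = a_q q n k.
Proof. by apply: eq_card => w; rewrite inE. Qed.

Lemma a_q_gt0 n : 1 < q -> 0 < k -> 0 < a_q q n k.
Proof.
move=> hq hk; rewrite -card_rll_words; apply/card_gt0P.
exists (nseq_tuple n (Ordinal hq)); rewrite inE; apply/RLLP => -[i].
rewrite size_map size_tuple => hi /(_ 0 hk).
by rewrite map_nseq nth_nseq ifT //; lia.
Qed.

Lemma split_cat_tuple m p (w : (m + p).-tuple 'I_q) :
  exists u v, w = cat_tuple u v.
Proof.
have hu : size (take m w) == m by rewrite size_takel // size_tuple leq_addr.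
have hv : size (drop m w) == p by rewrite size_drop size_tuple addKn.
by exists (Tuple hu), (Tuple hv); apply: val_inj; rewrite /= cat_take_drop.
Qed.

Lemma a_q_submult m p : a_q q (m + p) k <= a_q q m k * a_q q p k.
Proof.
rewrite -!card_rll_words -cardsX.
apply: leq_trans (leq_imset_card (fun uv => cat_tuple uv.1 uv.2) _).
apply/subset_leq_card/subsetP => w; have [u [v ->]] := split_cat_tuple w.
rewrite inE => /RLLP rll_uv; apply/imsetP; exists (u, v) => //.
rewrite !inE; apply/andP; split; apply/RLLP => hz; apply: rll_uv; rewrite map_cat.
  exact: zero_run_catl.
exact: zero_run_catr.
Qed.

Lemma b_q_supermult m p : h <= m -> h <= p -> h.*2 <= k.+1 ->
  b_q m * b_q p <= b_q (m + p).
Proof.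
move=> hm hp hk; rewrite /b_q -cardsX.
rewrite -(card_in_imset (f := fun uv => cat_tuple uv.1 uv.2)); last first.
  move=> [u1 v1] [u2 v2] _ _ /= /(congr1 val) /= /eqP.
  rewrite eqseq_cat ?size_tuple // => /andP[/eqP e1 /eqP e2].
  by congr pair; apply: val_inj.
apply/subset_leq_card/subsetP => _ /imsetP[[u v] /[!inE] /= /andP[hu hv] ->].
case/and3P: hu => /RLLP rll_u pu su; case/and3P: hv => /RLLP rll_v pv sv.
have hu : h <= size (map val u) by rewrite size_map size_tuple.
have hv : h <= size (map val v) by rewrite size_map size_tuple.
rewrite /= map_cat rev_cat zero_prefix_catl // zero_prefix_catl ?size_rev //.
rewrite pu sv !andbT; apply/RLLP; rewrite map_cat.
by case/(zero_run_cat_cases hu hv hk) => //; apply/negP.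
Qed.

Lemma card_zero_prefix n : h <= n ->
  #|[set w : n.-tuple 'I_q | zero_prefix h (map val w)]| <= q ^ (n - h).
Proof.
move=> hn; rewrite -[q in q ^ _]card_ord -card_tuple.
apply: (@leq_card_in _ _ (fun w : n.-tuple 'I_q => [tuple of drop h w])).
move=> u v /[!inE] hu hv /(congr1 (map val \o val)) /=; rewrite !map_drop => huv.
have su : h <= size (map val u) by rewrite size_map size_tuple.
have sv : h <= size (map val v) by rewrite size_map size_tuple.
apply/val_inj/(inj_map val_inj).
by rewrite (zero_prefix_nseq su hu) (zero_prefix_nseq sv hv) huv.
Qed.

Lemma card_zero_suffix n : h <= n ->
  #|[set w : n.-tuple 'I_q | zero_prefix h (rev (map val w))]| <= q ^ (n - h).
Proof.
move=> hn; have rev_tupleK : involutive (@rev_tuple n 'I_q).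
  by move=> w; apply: val_inj; exact: revK.
apply: leq_trans (card_zero_prefix hn).
rewrite -[X in _ <= X](card_preimset _ (inv_inj rev_tupleK)).
by apply/subset_leq_card/subsetP => w; rewrite !inE /= map_rev.
Qed.

Lemma b_q_le_a_q n : b_q n <= a_q q n k.
Proof.
rewrite -card_rll_words; apply/subset_leq_card/subsetP => w.
by rewrite inE => /andP[].
Qed.

Lemma a_q_le_b_q n : h <= n -> a_q q n k <= b_q n + 2 * q ^ (n - h).
Proof.
move=> hn; rewrite -card_rll_words.
have cover : rll_words n \subset rll_clean_words n :|:
    ([set w : n.-tuple 'I_q | zero_prefix h (map val w)] :|:
     [set w : n.-tuple 'I_q | zero_prefix h (rev (map val w))]).
  apply/subsetP => w; rewrite !inE => ->.
  by case: (zero_prefix h _); case: (zero_prefix h _).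
apply: leq_trans (subset_leq_card cover) _.
apply: leq_trans (leq_card_setU _ _) _; rewrite leq_add2l.
apply: leq_trans (leq_card_setU _ _) _.
by rewrite mul2n -addnn leq_add ?card_zero_prefix ?card_zero_suffix.
Qed.

End Words.

Lemma submult_expn (f : nat -> nat) :
  (forall m p, f (m + p) <= f m * f p) -> forall m n, f (m.+1 * n) <= f n ^ m.+1.
Proof.
move=> fsub; elim=> [|m IHm] n; first by rewrite mul1n expn1.
by rewrite mulSn expnS; apply: leq_trans (fsub _ _) _; rewrite leq_mul2l IHm orbT.
Qed.

Lemma supermult_expn (g : nat -> nat) t :
  (forall m p, t <= m -> t <= p -> g m * g p <= g (m + p)) ->
  forall m n, t <= n -> g n ^ m.+1 <= g (m.+1 * n).
Proof.
move=> gsup; elim=> [|m IHm] n tn; first by rewrite mul1n expn1.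
rewrite mulSn expnS; apply: leq_trans (gsup _ _ tn _); last first.
  by rewrite (leq_trans tn) // leq_pmull.
by rewrite leq_mul2l IHm ?orbT.
Qed.

Open Scope R_scope.

Lemma INR_expn b p : INR (b ^ p) = INR b ^ p.
Proof. by elim: p => [|p IHp] //=; rewrite expnS mulnE mult_INR IHp. Qed.

Lemma ln2_gt0 : 0 < ln 2.
Proof. by rewrite -ln_1; apply: ln_increasing; lra. Qed.

Lemma log2_div_le x y c : 0 < x -> x <= y -> 0 < c -> log2 x / c <= log2 y / c.
Proof.
move=> hx hxy hc; apply: Rmult_le_compat_r; first by left; apply: Rinv_0_lt_compat.
apply: Rmult_le_compat_r; first by left; apply/Rinv_0_lt_compat/ln2_gt0.
by case: (Rle_lt_or_eq_dec _ _ hxy) => [lt_xy | ->]; [left; apply: ln_increasing | right].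
Qed.

Lemma rate_expn b p n : (0 < b)%N -> (0 < p)%N -> (0 < n)%N ->
  log2 (INR (b ^ p)) / INR (p * n) = log2 (INR b) / INR n.
Proof.
move=> /ltP/lt_0_INR hb /ltP/lt_0_INR hp /ltP/lt_0_INR hn.
rewrite INR_expn mulnE mult_INR /log2 ln_pow //.
by have l2 := ln2_gt0; field; repeat split; lra.
Qed.

Lemma Rpower2_log2 y : 0 < y -> Rpower 2 (log2 y) = y.
Proof. by move=> hy; apply: Rpower_Rlog => //; lra. Qed.

Lemma Rpower2_le_of_rate y t E : 0 < y -> 0 < t -> E <= log2 y / t ->
  Rpower 2 (t * E) <= y.
Proof.
move=> hy ht hE; rewrite -(Rpower2_log2 hy); apply: Rle_Rpower; first lra.
have -> : log2 y = t * (log2 y / t) by field; lra.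
by apply: Rmult_le_compat_l; lra.
Qed.

Lemma le_Rpower2_of_rate y t E : 0 < y -> 0 < t -> log2 y / t <= E ->
  y <= Rpower 2 (t * E).
Proof.
move=> hy ht hE; rewrite -(Rpower2_log2 hy); apply: Rle_Rpower; first lra.
have -> : log2 y = t * (log2 y / t) by field; lra.
by apply: Rmult_le_compat_l; lra.
Qed.

Lemma Un_cv_le_multiples (u : nat -> R) l c n : Un_cv u l -> (0 < n)%N ->
  (forall m, u (m.+1 * n)%N <= c) -> l <= c.
Proof.
move=> hu hn hc; case: (Rle_or_lt l c) => // lt_cl; exfalso.
have [N HN] := hu (l - c) ltac:(lra).
have /HN /Rabs_def2 : (N.+1 * n >= N)%coq_nat by apply/leP; nia.
by have := hc N; lra.
Qed.

Lemma Un_cv_ge_multiples (u : nat -> R) l c n : Un_cv u l -> (0 < n)%N ->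
  (forall m, c <= u (m.+1 * n)%N) -> c <= l.
Proof.
move=> hu hn hc; suff : - l <= - c by lra.
by apply: (Un_cv_le_multiples (CV_opp _ _ hu) hn) => m; have := hc m; rewrite /opp_seq; lra.
Qed.

Lemma Rpower_rate_le_submult (f : nat -> nat) E n :
  Un_cv (fun m => log2 (INR (f m)) / INR m) E ->
  (forall m, (0 < f m)%N) -> (forall m p, (f (m + p) <= f m * f p)%N) ->
  (0 < n)%N -> Rpower 2 (INR n * E) <= INR (f n).
Proof.
move=> hE f_gt0 fsub n_gt0; have INR_gt0 m : (0 < m)%N -> 0 < INR m.
  by move=> /ltP; apply: lt_0_INR.
apply: Rpower2_le_of_rate; [exact: INR_gt0 | exact: INR_gt0 |].
apply: (Un_cv_le_multiples hE n_gt0) => m.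
rewrite -(rate_expn (f_gt0 n) (ltn0Sn m) n_gt0); apply: log2_div_le.
- exact: INR_gt0.
- by apply/le_INR/leP/submult_expn.
- by apply: INR_gt0; rewrite muln_gt0.
Qed.

Lemma le_Rpower_rate_supermult (f g : nat -> nat) t E n :
  Un_cv (fun m => log2 (INR (f m)) / INR m) E ->
  (forall m, (g m <= f m)%N) ->
  (forall m p, (t <= m)%N -> (t <= p)%N -> (g m * g p <= g (m + p))%N) ->
  (t <= n)%N -> (0 < n)%N -> INR (g n) <= Rpower 2 (INR n * E).
Proof.
move=> hE gf gsup tn n_gt0; have INR_gt0 m : (0 < m)%N -> 0 < INR m.
  by move=> /ltP; apply: lt_0_INR.
have [-> | g_gt0] := posnP (g n); first by left; apply: exp_pos.
apply: le_Rpower2_of_rate; [exact: INR_gt0 | exact: INR_gt0 |].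
apply: (Un_cv_ge_multiples hE n_gt0) => m.
rewrite -(rate_expn g_gt0 (ltn0Sn m) n_gt0); apply: log2_div_le.
- by apply/INR_gt0; rewrite expn_gt0 g_gt0.
- by apply/le_INR/leP; apply: leq_trans (supermult_expn gsup m tn) (gf _).
- by apply: INR_gt0; rewrite muln_gt0.
Qed.

Theorem lemma2 (q k : nat) (E : R)
    (hE : Un_cv (fun m : nat => Rdiv (log2 (INR (a_q q m k))) (INR m)) E)
    (n : nat) (hq : (2 <= q)%N) (hk : (0 < k)%N) (hkn : (k <= n)%N) :
  Rpower 2 (INR n * E) <= INR (a_q q n k) /\
  INR (a_q q n k) <= Rpower 2 (INR n * E) + 2 * INR (expn q (n - (k + 1) %/ 2)).
Proof.
set h := ((k + 1) %/ 2)%N.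
have hh : (h <= k)%N by rewrite /h; lia.
have h2 : (h.*2 <= k.+1)%N by rewrite /h -addnn; lia.
have n_gt0 : (0 < n)%N by lia.
split.
  apply: (Rpower_rate_le_submult hE) => // m; [exact: a_q_gt0 | exact: a_q_submult].
have b_le : INR (b_q q k h n) <= Rpower 2 (INR n * E).
  apply: (le_Rpower_rate_supermult hE (b_q_le_a_q _ _ _) _ (leq_trans hh hkn) n_gt0).
  by move=> m p hm hp; exact: b_q_supermult.
have /le_INR := leP (a_q_le_b_q q k (leq_trans hh hkn)).
by rewrite plus_INR mult_INR /=; lra.
Qed.
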